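(* Fix an integer $n\ge1$. Let $Q$ be the variety obtained by gluing $Q_0=\mathbb A^1\times\mathbb A^2$ and $Q_1=\mathbb A^1\times\mathbb A^2$ (coordinates $(t,(u,v))$ on each) along the open sets $\{t\ne0\}$ via $Q_0\supset\{t\neq 0\}\to\{t\ne0\}\subset Q_1$, $(t,(u,v))\mapsto(t^{-1},(t^{n+1}v^n+t^{n+2}u,\,tv))$. Define regular functions on $Q$ (given on $Q_0$; on $Q_1$) by: $f_0=tv$; $v$. $f_1=v$; $tv$. $g_i=t^{n+2-i}u+t^{n+1-i}v^n$; $t^iu$ ($i=0,\dots,n+1$). $h=u$; $t^{n+2}u-t^{n+1}v^n$. Let $\hat P\subset\mathbb A^{n+5}$ be the reduced affine variety defined by the ideal $I\subset\mathbb{C}[X_0,X_1,Y_0,\dots,Y_{n+1},Z]$ generated by $Y_iY_j-Y_kY_l$ ($i+j=k+l$), $X_0Y_{i+1}-X_1Y_i$ ($i=0,\dots,n$), $ZY_i+X_1^nY_{i+1}-Y_{i+1}Y_{n+1}$ ($i=0,\dots,n$), and $ZX_0+X_1^{n+1}-X_1Y_{n+1}$, and let $\psi=(f_0,f_1,g_0,\dots,g_{n+1},h)\colon Q\to\hat P$. Then $\psi$ contracts the curve $C=\{u=v=0\}\simeq\mathbb P^1$ to $0$ and restricts to an isomorphism $Q\setminus C\to\hat P\setminus\{0\}$; moreover $\mathcal O(Q)=\mathbb C[f_0,f_1,g_0,\dots,g_{n+1},h]$ and $\psi^*\colon\mathcal O(\hat P)\to\mathcal O(Q)$ is an isomorp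hism.
   Context: All varieties are over $\mathbb{C}$. (In the paper, $\hat P$ is the affine extension $\hat P_n$ of $\mathrm{SL}_2$.) *)

(* Classical (point-set) algebraic geometry over an
   algebraically closed field K of characteristic 0 (stand-in for C). *)
From HB Require Import structures.
From mathcomp Require Import all_boot all_order all_algebra.
Set Implicit Arguments. Unset Strict Implicit. Unset Printing Implicit Defensive.
Import GRing.Theory.
Local Open Scope ring_scope.

Definition pt (K : Type) (k : nat) := 'I_k -> K.

(* Polynomial functions on A^k (over an infinite field these are exactly
   the polynomials in k variables). *)
Inductive polyfun (K : fieldType) (k : nat) : (pt K k -> K) -> Prop :=
| polyfun_const (c : K) : polyfun (fun _ => c)
| polyfun_var (i : 'I_k) : polyfun (fun x => x i)
| polyfun_add f g : polyfun f -> polyfun g -> polyfun (fun x => f x + g x)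
| polyfun_mul f g : polyfun f -> polyfun g -> polyfun (fun x => f x * g x)
| polyfun_ext f g : polyfun f -> (forall x, f x = g x) -> polyfun g.

Definition origin (K : fieldType) (k : nat) : pt K k := fun _ => 0.

Definition tc (K : fieldType) (p : pt K 3) : K := p (inord 0).
Definition uc (K : fieldType) (p : pt K 3) : K := p (inord 1).
Definition vc (K : fieldType) (p : pt K 3) : K := p (inord 2).
Definition mk3 (K : fieldType) (t u v : K) : pt K 3 :=
  fun i => if val i == 0%N then t else if val i == 1%N then u else v.

Definition trans (K : fieldType) (n : nat) (p : pt K 3) : pt K 3 :=
  let t := tc p in let u := uc p in let v := vc p in
  mk3 t^-1 (t ^+ n.+1 * v ^+ n + t ^+ n.+2 * u) (t * v).

(* A point of Q is represented by a chart index (false = Q_0, true = Q_1)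
   and a point of that chart, up to the gluing relation Qequiv. *)
Definition Qpt (K : fieldType) := (bool * pt K 3)%type.

Definition Qequiv (K : fieldType) (n : nat) (a b : Qpt K) : Prop :=
  a = b
  \/ (a.1 = false /\ b.1 = true /\ tc a.2 != 0 /\ b.2 = trans n a.2)
  \/ (b.1 = false /\ a.1 = true /\ tc b.2 != 0 /\ a.2 = trans n b.2).

Definition Qcompat (K : fieldType) (T : Type) (n : nat) (F : bool -> pt K 3 -> T) :=
  forall p : pt K 3, tc p != 0 -> F false p = F true (trans n p).

Definition regularQ (K : fieldType) (n : nat) (F : bool -> pt K 3 -> K) : Prop :=
  Qcompat n F /\ polyfun (F false) /\ polyfun (F true).

Definition inC (K : fieldType) (p : pt K 3) : Prop := uc p = 0 /\ vc p = 0.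

Definition f0 (K : fieldType) (b : bool) (p : pt K 3) : K :=
  if ~~ b then tc p * vc p else vc p.
Definition f1 (K : fieldType) (b : bool) (p : pt K 3) : K :=
  if ~~ b then vc p else tc p * vc p.
Definition gfun (K : fieldType) (n i : nat) (b : bool) (p : pt K 3) : K :=
  if ~~ b then tc p ^+ (n.+2 - i) * uc p + tc p ^+ (n.+1 - i) * vc p ^+ n
  else tc p ^+ i * uc p.
Definition hfun (K : fieldType) (n : nat) (b : bool) (p : pt K 3) : K :=
  if ~~ b then uc p else tc p ^+ n.+2 * uc p - tc p ^+ n.+1 * vc p ^+ n.

(* Coordinates on A^(n+5): index 0 = X_0, 1 = X_1, 2+i = Y_i (0<=i<=n+1),
   n+4 = Z. *)
Definition psi (K : fieldType) (n : nat) (b : bool) (p : pt K 3) : pt K n.+4.+1 :=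
  fun j =>
    if val j == 0%N then f0 b p
    else if val j == 1%N then f1 b p
    else if (val j < n.+4)%N then gfun n (val j - 2) b p
    else hfun n b p.

Definition X0c (K : fieldType) (n : nat) (x : pt K n.+4.+1) : K := x (inord 0).
Definition X1c (K : fieldType) (n : nat) (x : pt K n.+4.+1) : K := x (inord 1).
Definition Yc (K : fieldType) (n : nat) (i : nat) (x : pt K n.+4.+1) : K := x (inord i.+2).
Definition Zc (K : fieldType) (n : nat) (x : pt K n.+4.+1) : K := x (inord n.+4).

(* Phat = V(I) in A^(n+5) (with reduced structure; its coordinate ring is the
   ring of polynomial functions restricted to this point set). *)
Definition inPhat (K : fieldType) (n : nat) (x : pt K n.+4.+1) : Prop :=
  (forall i j k l : nat, (i <= n.+1)%N -> (j <= n.+1)%N -> (k <= n.+1)%N ->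
     (l <= n.+1)%N -> (i + j = k + l)%N ->
     Yc i x * Yc j x - Yc k x * Yc l x = 0)
  /\ (forall i : nat, (i <= n)%N -> X0c x * Yc i.+1 x - X1c x * Yc i x = 0)
  /\ (forall i : nat, (i <= n)%N ->
        Zc x * Yc i x + X1c x ^+ n * Yc i.+1 x - Yc i.+1 x * Yc n.+1 x = 0)
  /\ Zc x * X0c x + X1c x ^+ n.+1 - X1c x * Yc n.+1 x = 0.

Arguments origin K k : clear implicits.
Arguments psi {K} n b p.
Arguments inPhat {K} n x.
Arguments trans {K} n p.
Arguments Qequiv {K} n a b.
Arguments Qcompat {K T} n F.
Arguments regularQ {K} n F.
Arguments gfun {K} n i b p.
Arguments hfun {K} n b p.

(* Off the curve C one of
   X1, X0, Y0, Z is nonzero at the image point, and the equations of Phat then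
   force the Y_i to form a geometric progression, so the point can be read back
   in a chart with coordinates that are quotients of polynomials; hence psi is a
   bijection from Q \ C onto Phat \ {0}, and psi^* is injective on O(Phat).

   For surjectivity of psi^*, write a regular function in chart 1 as a
   polynomial in (t, u, v).  The monomials t^a u^b v^c with a <= (n+1) b + c
   are products of X0 = v, X1 = t v and Y_i = t^i u.  The remaining ones,
   transported to chart 0 and restricted to the curves (c t, u / c, v), only
   contain negative powers of c; since the function is regular in chart 0, its
   monomials t^a u^b v^c there all have a < b, i.e. it is a polynomial in
   t u = Y_(n+1) - X1^n, u = Z and v = X1.  Agreement in chart 1 follows by
   density of {t <> 0}.  Characteristic 0 is only used to know that a
   polynomial vanishing at all nonzero points of K is zero. *)

From HB Require Import structures.
From mathcomp Require Import all_boot all_order all_algebra.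
From mathcomp Require Import ring zify.
From Stdlib Require Import FunctionalExtensionality.
Set Implicit Arguments. Unset Strict Implicit. Unset Printing Implicit Defensive.
Import GRing.Theory.
Local Open Scope ring_scope.

Section PolynomialFunctions.
Variables (K : fieldType) (k : nat).
Implicit Types (f g : pt K k -> K) (p : pt K k).

Lemma polyfun_opp f : polyfun f -> polyfun (fun x => - f x).
Proof.
move=> pf; apply: (polyfun_ext (polyfun_mul (polyfun_const _ (-1)) pf)) => x.
by rewrite mulN1r.
Qed.

Lemma polyfun_sub f g : polyfun f -> polyfun g -> polyfun (fun x => f x - g x).
Proof. by move=> pf pg; apply/polyfun_add/polyfun_opp. Qed.

Lemma polyfun_exp f m : polyfun f -> polyfun (fun x => f x ^+ m).
Proof.
move=> pf; elim: m => [|m IHm].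
  by apply: (polyfun_ext (polyfun_const _ 1)) => x; rewrite expr0.
by apply: (polyfun_ext (polyfun_mul pf IHm)) => x; rewrite exprS.
Qed.

Lemma polyfun_sum (I : Type) (s : seq I) (P : pred I) (F : I -> pt K k -> K) :
  (forall i, polyfun (F i)) -> polyfun (fun x => \sum_(i <- s | P i) F i x).
Proof.
move=> pF; elim: s => [|i s IHs].
  by apply: (polyfun_ext (polyfun_const _ 0)) => x; rewrite big_nil.
have [Pi|nPi] := boolP (P i).
  by apply: (polyfun_ext (polyfun_add (pF i) IHs)) => x; rewrite big_cons Pi.
by apply: (polyfun_ext IHs) => x; rewrite big_cons (negbTE nPi).
Qed.

Lemma polyfun_comp m (phi : pt K m -> pt K k) (P : pt K k -> K) :
  (forall j, polyfun (fun y => phi y j)) -> polyfun P -> polyfun (fun y => P (phi y)).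
Proof.
move=> pphi; elim=> {P} [c|j|f g _ pf _ pg|f g _ pf _ pg|f g _ pf fg].
- exact: polyfun_const.
- exact: pphi.
- exact: polyfun_add.
- exact: polyfun_mul.
- by apply: (polyfun_ext pf) => y; rewrite fg.
Qed.

Definition setc p (i : 'I_k) (c : K) : pt K k := fun j => if j == i then c else p j.

Lemma setc_id p i : setc p i (p i) = p.
Proof. by apply: functional_extensionality => j; rewrite /setc; case: eqP => [->|]. Qed.

Lemma polyfun_restrict_line f p i : polyfun f ->
  exists q : {poly K}, forall c, f (setc p i c) = q.[c].
Proof.
elim=> {f} [c|j|f g _ [q1 e1] _ [q2 e2]|f g _ [q1 e1] _ [q2 e2]|f g _ [q e] fg].
- by exists c%:P => x; rewrite hornerC.
- exists (if j == i then 'X else (p j)%:P) => c; rewrite /setc.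
  by case: eqP => _; rewrite ?hornerX ?hornerC.
- by exists (q1 + q2) => c; rewrite hornerD e1 e2.
- by exists (q1 * q2) => c; rewrite hornerM e1 e2.
- by exists q => c; rewrite -fg e.
Qed.

End PolynomialFunctions.

Section CharacteristicZero.
Variable K : fieldType.
Hypothesis K0 : [pchar K] =i pred0.

Lemma natr_inj_pchar0 : injective (fun m : nat => m%:R : K).
Proof.
suff le_inj a b : (a <= b)%N -> a%:R = b%:R :> K -> a = b.
  move=> a b e; case: (leqP a b) => [ab|/ltnW ba]; first exact: le_inj.
  by apply/esym/le_inj.
move=> ab e; apply/eqP; rewrite eqn_leq ab /= -subn_eq0.
by rewrite -(iffLR (pcharf0P K) K0) natrB // e subrr.
Qed.

Lemma poly_eq0_on_units (q : {poly K}) : (forall c, c != 0 -> q.[c] = 0) -> q = 0.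
Proof.
move=> q0; pose rs := [seq i.+1%:R : K | i <- iota 0 (size q)].
apply: (@roots_geq_poly_eq0 _ _ rs); last by rewrite size_map size_iota.
  apply/allP=> _ /mapP[i _ ->]; apply/eqP/q0.
  by rewrite (iffLR (pcharf0P K) K0).
by rewrite map_inj_uniq ?iota_uniq // => a b /natr_inj_pchar0 [].
Qed.

(* Clearing denominators, [c^M * q.[c^-1]] is a polynomial in [c] of size at
   most [M = size q] because [q] has no constant term. *)
Lemma poly_eq0_of_inv_eval (p q : {poly K}) : q.[0] = 0 ->
  (forall c, c != 0 -> p.[c] = q.[c^-1]) -> p = 0.
Proof.
move=> q00 pq; pose M := size q.
pose r := \sum_(i < M) q`_i *: 'X^(M - i).
have Xp : 'X^M * p = r.
  apply/eqP; rewrite -subr_eq0; apply/eqP/poly_eq0_on_units => c c0.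
  rewrite hornerD hornerN hornerM hornerXn pq // horner_coef horner_sum mulr_sumr.
  rewrite -sumrB big1 // => i _; rewrite hornerZ hornerXn exprVn expfB //.
  by rewrite mulrCA subrr.
apply/eqP; apply: contraT => p0.
have : (size r <= M)%N.
  apply: leq_trans (size_sum _ _ _) _; apply/bigmax_leqP => -[[|i] iM] _ /=.
    by rewrite -horner_coef0 q00 scale0r size_poly0.
  by apply: leq_trans (size_scale_leq _ _) _; rewrite size_polyXn; lia.
by rewrite -Xp mulrC size_mulXn // -{2}[M]addn0 leq_add2l leqn0 size_poly_eq0 (negbTE p0).
Qed.

Lemma polyfun_eq0_off_hyperplane k (f : pt K k -> K) (i : 'I_k) : polyfun f ->
  (forall p, p i != 0 -> f p = 0) -> forall p, f p = 0.
Proof.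
move=> pf f0 p; have [q fq] := polyfun_restrict_line p i pf.
suff q0 : q = 0 by rewrite -(setc_id p i) fq q0 horner0.
apply: poly_eq0_on_units => c c0; by rewrite -fq f0 // /setc eqxx.
Qed.

End CharacteristicZero.

Section ChartCoordinates.
Variable K : fieldType.
Implicit Types (p q : pt K 3) (t u v : K).

Lemma tc_mk3 t u v : tc (mk3 t u v) = t. Proof. by rewrite /tc /mk3 /= inordK. Qed.
Lemma uc_mk3 t u v : uc (mk3 t u v) = u. Proof. by rewrite /uc /mk3 /= inordK. Qed.
Lemma vc_mk3 t u v : vc (mk3 t u v) = v. Proof. by rewrite /vc /mk3 /= inordK. Qed.

Lemma mk3_coord p : mk3 (tc p) (uc p) (vc p) = p.
Proof.
apply: functional_extensionality => -[[|[|[|i]]] lti] //=; rewrite /mk3 /tc /uc /vc /=;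
  by congr p; apply: val_inj; rewrite /= inordK.
Qed.

Lemma pt3_eq p q : tc p = tc q -> uc p = uc q -> vc p = vc q -> p = q.
Proof. by move=> et_pq eu_pq ev_pq; rewrite -(mk3_coord p) -(mk3_coord q) et_pq eu_pq ev_pq. Qed.

Lemma polyfun_tc : polyfun (@tc K). Proof. exact: polyfun_var. Qed.
Lemma polyfun_uc : polyfun (@uc K). Proof. exact: polyfun_var. Qed.
Lemma polyfun_vc : polyfun (@vc K). Proof. exact: polyfun_var. Qed.

Record term := Term { coef : K; et : nat; eu : nat; ev : nat }.

Definition term_eval p (m : term) : K :=
  coef m * tc p ^+ et m * uc p ^+ eu m * vc p ^+ ev m.

Definition term_mul (m m' : term) : term :=
  Term (coef m * coef m') (et m + et m') (eu m + eu m') (ev m + ev m').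

Lemma term_eval_mul p m m' : term_eval p (term_mul m m') = term_eval p m * term_eval p m'.
Proof. by rewrite /term_eval /= !exprD; ring. Qed.

Lemma polyfun_terms (f : pt K 3 -> K) : polyfun f ->
  exists s : seq term, forall p, f p = \sum_(m <- s) term_eval p m.
Proof.
elim=> {f} [c|i|f g _ [s1 e1] _ [s2 e2]|f g _ [s1 e1] _ [s2 e2]|f g _ [s e] fg].
- by exists [:: Term c 0 0 0] => p; rewrite big_seq1 /term_eval /= !mulr1.
- exists [:: if val i == 0%N then Term 1 1 0 0 else if val i == 1%N then Term 1 0 1 0
             else Term 1 0 0 1] => p.
  rewrite -{1}(mk3_coord p) big_seq1 /mk3 /term_eval.
  by case: ifP => _; [|case: ifP => _]; rewrite /= !expr0 !expr1 !mulr1 mul1r.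
- by exists (s1 ++ s2) => p; rewrite big_cat e1 e2.
- exists [seq term_mul m m' | m <- s1, m' <- s2] => p.
  rewrite big_allpairs_dep e1 e2 mulr_suml; apply: eq_bigr => m _.
  by rewrite mulr_sumr; apply: eq_bigr => m' _; rewrite term_eval_mul.
- by exists s => p; rewrite -fg e.
Qed.

Lemma notC_mk3 t u v : u != 0 \/ v != 0 -> ~ inC (mk3 t u v).
Proof. by rewrite /inC uc_mk3 vc_mk3 => -[] /eqP nz [u0 v0]. Qed.

Lemma notC_coord p : ~ inC p -> uc p != 0 \/ vc p != 0.
Proof.
move=> pC; have [u0|] := eqVneq (uc p) 0; last by left.
by right; apply/eqP => v0; apply: pC.
Qed.

Lemma mk3_div (a b d g : K) : (fun i => mk3 a b d i / g) = mk3 (a / g) (b / g) (d / g).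
Proof.
apply: functional_extensionality => i; rewrite /mk3.
by case: (val i == 0%N); last case: (val i == 1%N).
Qed.

End ChartCoordinates.

Section TheMorphismPsi.
Variables (K : fieldType) (n : nat).
Implicit Types (p q : pt K 3) (x y : pt K n.+4.+1).

Lemma tc_trans p : tc (trans n p) = (tc p)^-1.
Proof. exact: tc_mk3. Qed.
Lemma uc_trans p : uc (trans n p) = tc p ^+ n.+1 * vc p ^+ n + tc p ^+ n.+2 * uc p.
Proof. exact: uc_mk3. Qed.
Lemma vc_trans p : vc (trans n p) = tc p * vc p.
Proof. exact: vc_mk3. Qed.

Lemma ptN_coord x (j : 'I_n.+4.+1) :
  x j = if val j == 0%N then X0c x else if val j == 1%N then X1c x
        else if (val j < n.+4)%N then Yc (val j - 2) x else Zc x.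
Proof.
rewrite /X0c /X1c /Yc /Zc; case: j => [[|[|j]] ltj] /=;
  try by congr x; apply: val_inj; rewrite /= inordK.
rewrite subn2 /=; case: ifP => ltjn; congr x; apply: val_inj; rewrite /= inordK //.
by apply/eqP; rewrite eqn_leq -ltnS ltj leqNgt ltjn.
Qed.

Lemma ptN_eq x y : X0c x = X0c y -> X1c x = X1c y ->
  (forall i, (i <= n.+1)%N -> Yc i x = Yc i y) -> Zc x = Zc y -> x = y.
Proof.
move=> e0 e1 eY eZ; apply: functional_extensionality => j.
rewrite (ptN_coord x) (ptN_coord y) e0 e1 eZ; do 2![case: ifP => // _].
by case: ifP => // ltj; rewrite eY // leq_subLR.
Qed.

Lemma polyfun_X0 : polyfun (@X0c K n). Proof. exact: polyfun_var. Qed.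
Lemma polyfun_X1 : polyfun (@X1c K n). Proof. exact: polyfun_var. Qed.
Lemma polyfun_Y i : polyfun (@Yc K n i). Proof. exact: polyfun_var. Qed.
Lemma polyfun_Z : polyfun (@Zc K n). Proof. exact: polyfun_var. Qed.

Lemma psiX0 b p : X0c (psi n b p) = f0 b p.
Proof. by rewrite /X0c /psi /= inordK. Qed.
Lemma psiX1 b p : X1c (psi n b p) = f1 b p.
Proof. by rewrite /X1c /psi /= inordK. Qed.
Lemma psiY b p i : (i <= n.+1)%N -> Yc i (psi n b p) = gfun n i b p.
Proof. by move=> lein; rewrite /Yc /psi /= inordK ?ltnS ?subn2 //= (leq_trans lein). Qed.
Lemma psiZ b p : Zc (psi n b p) = hfun n b p.
Proof. by rewrite /Zc /psi /= inordK //= ltnn. Qed.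

Lemma gfun_chart0 i p : (i <= n.+1)%N ->
  gfun n i false p = tc p ^+ (n.+1 - i) * (tc p * uc p + vc p ^+ n).
Proof. by move=> lein; rewrite /gfun /= subSn // exprS; ring. Qed.

Lemma gfun_chart1 i p : gfun n i true p = tc p ^+ i * uc p.
Proof. by []. Qed.

Lemma psi_trans p : tc p != 0 -> psi n false p = psi n true (trans n p).
Proof.
move=> t0; apply: ptN_eq => [||i lein|].
- by rewrite !psiX0 /f0 /= vc_trans.
- by rewrite !psiX1 /f1 /= tc_trans vc_trans mulrA mulVf ?mul1r.
- rewrite !psiY // gfun_chart0 // gfun_chart1 tc_trans uc_trans.
  have -> : n.+2 = (n.+1 - i + i).+1 by rewrite subnK.
  rewrite -(subnK lein) addnK !exprS exprD exprVn; field.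
  by rewrite expf_neq0.
- rewrite !psiZ /hfun /= tc_trans uc_trans vc_trans !exprVn !exprS exprMn; field.
  by rewrite t0 expf_neq0.
Qed.

Lemma polyfun_psi b (j : 'I_n.+4.+1) : polyfun (fun p => psi n b p j).
Proof.
move: (@polyfun_tc K) (@polyfun_uc K) (@polyfun_vc K) => pt pu pv.
rewrite /psi; case: (val j == 0%N); last case: (val j == 1%N);
  last case: (val j < n.+4)%N; case: b; rewrite /f0 /f1 /gfun /hfun /=;
  by repeat (apply: polyfun_exp || apply: polyfun_sub || apply: polyfun_add ||
             apply: polyfun_mul || done).
Qed.

Lemma regular_psi (j : 'I_n.+4.+1) : regularQ n (fun b p => psi n b p j).
Proof.
split; last by split; apply: polyfun_psi.
by move=> p t0; rewrite psi_trans.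
Qed.

Lemma regularQ_sub (F G : bool -> pt K 3 -> K) : regularQ n F -> regularQ n G ->
  regularQ n (fun b p => F b p - G b p).
Proof.
move=> [cF [pF0 pF1]] [cG [pG0 pG1]].
by split; [move=> p t0; rewrite cF // cG | split; apply: polyfun_sub].
Qed.

Lemma trans_onto q : tc q != 0 -> exists2 p, tc p != 0 & trans n p = q.
Proof.
move=> t0; exists (mk3 (tc q)^-1 (tc q ^+ n.+2 * uc q - tc q ^+ n.+1 * vc q ^+ n) (tc q * vc q)).
  by rewrite tc_mk3 invr_eq0.
apply: pt3_eq; rewrite ?tc_trans ?uc_trans ?vc_trans tc_mk3 ?uc_mk3 ?vc_mk3 ?invrK //.
  by rewrite !exprVn !exprMn !exprS; field; rewrite t0 expf_neq0.
by rewrite mulrA mulVf ?mul1r.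
Qed.

Lemma regular_comp_psi (P : pt K n.+4.+1 -> K) : polyfun P ->
  regularQ n (fun b p => P (psi n b p)).
Proof.
move=> pP; split; first by move=> p t0; rewrite psi_trans.
by split; apply: polyfun_comp pP => j; apply: polyfun_psi.
Qed.

Lemma inPhat_psi b p : inPhat n (psi n b p).
Proof.
split; [|split; [|split]].
- move=> i j k l lei lej lek lel ijkl; rewrite !psiY //.
  have sq e e' (w : K) : tc p ^+ e * w * (tc p ^+ e' * w) = tc p ^+ (e + e') * w ^+ 2.
    by rewrite exprD; ring.
  case: b; rewrite ?gfun_chart1 ?gfun_chart0 // !sq; first by rewrite ijkl subrr.
  have -> : (n.+1 - i + (n.+1 - j) = n.+1 - k + (n.+1 - l))%N by lia.
  by rewrite subrr.
- move=> i lein; rewrite psiX0 psiX1 !psiY //; last by lia.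
  case: b; rewrite ?gfun_chart1 ?gfun_chart0 /f0 /f1 /=; try lia.
    by rewrite exprS; ring.
  by rewrite subSS subSn // exprS; ring.
- move=> i lein; rewrite psiZ psiX1 !psiY //; last by lia.
  case: b; rewrite ?gfun_chart1 ?gfun_chart0 /hfun /f1 /=; try lia.
    by rewrite !exprS exprMn; ring.
  by rewrite subSS subnn subSn // exprS; ring.
- rewrite psiZ psiX0 psiX1 psiY //; case: b.
    by rewrite gfun_chart1 /hfun /f0 /f1 /= !exprS exprMn; ring.
  by rewrite gfun_chart0 // /hfun /f0 /f1 /= subnn exprS; ring.
Qed.

Lemma psi_neq0_off_C b p : ~ inC p -> psi n b p <> origin K n.+4.+1.
Proof.
move=> pC psi0; apply: pC.
have e0 : f0 b p = 0 by rewrite -psiX0 psi0.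
have e1 : f1 b p = 0 by rewrite -psiX1 psi0.
have eY : gfun n 0 b p = 0 by rewrite -psiY // psi0.
have eZ : hfun n b p = 0 by rewrite -psiZ psi0.
case: b {psi0} e0 e1 eY eZ; rewrite /f0 /f1 /hfun /=.
  by rewrite gfun_chart1 expr0 mul1r => v0 _ u0 _.
by move=> _ v0 _ u0.
Qed.

Hypothesis n_gt0 : (0 < n)%N.

Lemma expr0n_gt0 : (0 : K) ^+ n = 0.
Proof. by rewrite expr0n gtn_eqF. Qed.

Lemma psi_contract b p : inC p -> psi n b p = origin K n.+4.+1.
Proof.
case=> u0 v0; apply: ptN_eq => [||i lein|].
- by rewrite psiX0 /f0 v0; case: b; rewrite /= ?mulr0.
- by rewrite psiX1 /f1 v0; case: b; rewrite /= ?mulr0.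
- rewrite psiY //; case: b; rewrite ?gfun_chart1 ?gfun_chart0 // u0 ?mulr0 //.
  by rewrite v0 expr0n_gt0 addr0 mulr0.
- by rewrite psiZ /hfun u0 v0; case: b; rewrite /= ?expr0n_gt0 ?mulr0 ?subr0.
Qed.

End TheMorphismPsi.

Section GeometricSequences.
Variables (R : ringType) (Y : nat -> R) (t : R) (m : nat).

Lemma geometric_down : (forall i, (i < m)%N -> Y i = t * Y i.+1) ->
  forall i, (i <= m)%N -> Y i = t ^+ (m - i) * Y m.
Proof.
move=> Ydown i lei; rewrite -{1}(subKn lei).
elim: (m - i)%N (leq_subr i m) => [|k IHk] ltk; first by rewrite subn0 mul1r.
rewrite Ydown; last by lia.
have -> : (m - k.+1).+1 = (m - k)%N by lia.
by rewrite IHk ?exprS ?mulrA //; lia.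
Qed.

Lemma geometric_up : (forall i, (i < m)%N -> Y i.+1 = t * Y i) ->
  forall i, (i <= m)%N -> Y i = t ^+ i * Y 0%N.
Proof.
move=> Yup; elim=> [|i IHi] lti; first by rewrite mul1r.
by rewrite Yup // IHi ?exprS ?mulrA // ltnW.
Qed.

End GeometricSequences.

Section InverseOfPsi.
Variables (K : fieldType) (n : nat).
Implicit Types (p q : pt K 3) (x y : pt K n.+4.+1).

Lemma psi_chart0_X1 x : inPhat n x -> X1c x != 0 ->
  psi n false (mk3 (X0c x / X1c x) (Zc x) (X1c x)) = x.
Proof.
case=> _ [XY [_ ZX]] X1x; apply: ptN_eq => [||i lein|].
- by rewrite psiX0 /f0 /= tc_mk3 vc_mk3 divfK.
- by rewrite psiX1 /f1 /= vc_mk3.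
- rewrite psiY // gfun_chart0 // tc_mk3 uc_mk3 vc_mk3.
  have -> : X0c x / X1c x * Zc x + X1c x ^+ n = Yc n.+1 x.
    by apply: (mulfI X1x); rewrite -(subr0_eq ZX) exprS; field.
  symmetry; apply: (geometric_down (Y := fun i => Yc i x)) => // j ltj.
  by apply: (mulfI X1x); rewrite -(subr0_eq (XY j ltj)); field.
- by rewrite psiZ /hfun /= uc_mk3.
Qed.

Lemma psi_chart1_X0 x : inPhat n x -> X0c x != 0 ->
  psi n true (mk3 (X1c x / X0c x) (Yc 0 x) (X0c x)) = x.
Proof.
case=> _ [XY [_ ZX]] X0x.
have Yx i : (i <= n.+1)%N -> Yc i x = (X1c x / X0c x) ^+ i * Yc 0 x.
  apply: (geometric_up (Y := fun i => Yc i x)) => j ltj.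
  by apply: (mulfI X0x); rewrite (subr0_eq (XY j ltj)); field.
apply: ptN_eq => [||i lein|].
- by rewrite psiX0 /f0 /= vc_mk3.
- by rewrite psiX1 /f1 /= tc_mk3 vc_mk3 divfK.
- by rewrite psiY // gfun_chart1 tc_mk3 uc_mk3 (Yx i lein).
- rewrite psiZ /hfun /= tc_mk3 uc_mk3 vc_mk3; apply: (mulIf X0x).
  have -> : Zc x * X0c x = X1c x * Yc n.+1 x - X1c x ^+ n.+1.
    by rewrite -(subr0_eq ZX) addrK.
  rewrite (Yx n.+1) // !exprS !exprMn !exprVn; field.
  by rewrite X0x expf_neq0.
Qed.

Lemma psi_chart1_Y0 x : inPhat n x -> Yc 0 x != 0 ->
  psi n true (mk3 (Yc 1 x / Yc 0 x) (Yc 0 x) (X0c x)) = x.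
Proof.
case=> YY [XY [ZY _]] Y0x.
have Yx i : (i <= n.+1)%N -> Yc i x = (Yc 1 x / Yc 0 x) ^+ i * Yc 0 x.
  apply: (geometric_up (Y := fun i => Yc i x)) => j ltj.
  apply: (mulIf Y0x); rewrite (subr0_eq (YY j.+1 0 1 j _ _ _ _ _)) ?addn0 //; try lia.
  by field.
have X1x : X1c x = Yc 1 x / Yc 0 x * X0c x.
  by apply: (mulIf Y0x); rewrite -(subr0_eq (XY 0%N _)) //; field.
apply: ptN_eq => [||i lein|].
- by rewrite psiX0 /f0 /= vc_mk3.
- by rewrite psiX1 /f1 /= tc_mk3 vc_mk3 X1x.
- by rewrite psiY // gfun_chart1 tc_mk3 uc_mk3 (Yx i lein).
- rewrite psiZ /hfun /= tc_mk3 uc_mk3 vc_mk3; apply: (mulIf Y0x).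
  have -> : Zc x * Yc 0 x = Yc 1 x * Yc n.+1 x - X1c x ^+ n * Yc 1 x.
    by rewrite -(subr0_eq (ZY 0%N _)) // addrK.
  rewrite X1x (Yx n.+1) // !exprS !exprMn !exprVn; field.
  by rewrite Y0x expf_neq0.
Qed.

Lemma psi_chart0_Z x : inPhat n x -> Zc x != 0 ->
  psi n false (mk3 ((Yc n.+1 x - X1c x ^+ n) / Zc x) (Zc x) (X1c x)) = x.
Proof.
case=> _ [_ [ZY ZX]] Zx; apply: ptN_eq => [||i lein|].
- rewrite psiX0 /f0 /= tc_mk3 vc_mk3; apply: (mulfI Zx).
  have -> : Zc x * X0c x = X1c x * Yc n.+1 x - X1c x ^+ n.+1.
    by rewrite -(subr0_eq ZX) addrK.
  by rewrite exprS; field.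
- by rewrite psiX1 /f1 /= vc_mk3.
- rewrite psiY // gfun_chart0 // tc_mk3 uc_mk3 vc_mk3 divfK // subrK.
  symmetry; apply: (geometric_down (Y := fun i => Yc i x)) => // j ltj.
  apply: (mulfI Zx).
  have -> : Zc x * Yc j x = Yc j.+1 x * Yc n.+1 x - X1c x ^+ n * Yc j.+1 x.
    by rewrite -(subr0_eq (ZY j ltj)) addrK.
  by field.
- by rewrite psiZ /hfun /= uc_mk3.
Qed.

Hypothesis n_gt0 : (0 < n)%N.

Lemma Phat_origin_or_chart x : inPhat n x ->
  x = origin K n.+4.+1 \/ X1c x != 0 \/ X0c x != 0 \/ Yc 0 x != 0 \/ Zc x != 0.
Proof.
case=> YY [_ [ZY _]].
have [X1x|] := eqVneq (X1c x) 0; last by right; left.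
have [X0x|] := eqVneq (X0c x) 0; last by right; right; left.
have [Y0x|] := eqVneq (Yc 0 x) 0; last by right; right; right; left.
have [Zx|] := eqVneq (Zc x) 0; last by right; right; right; right.
left; have sq0 (w : K) : w * w = 0 -> w = 0 by move/eqP; rewrite mulf_eq0 orbb => /eqP.
have Ynx : Yc n.+1 x = 0.
  apply/sq0/eqP; rewrite -oppr_eq0; apply/eqP.
  by have := ZY n (leqnn n); rewrite Zx X1x expr0n_gt0 // !mul0r add0r sub0r.
apply: ptN_eq => // i lein; apply: sq0.
have [lei2|lti2] := leqP (i + i) n.+1.
  by rewrite (subr0_eq (YY i i 0 (i + i)%N _ _ _ _ _)) ?Y0x ?mul0r //; lia.
by rewrite (subr0_eq (YY i i (i + i - n.+1)%N n.+1 _ _ _ _ _)) ?Ynx ?mulr0 //; lia.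
Qed.

Definition psi_inv x : Qpt K :=
  if X1c x != 0 then (false, mk3 (X0c x / X1c x) (Zc x) (X1c x))
  else if X0c x != 0 then (true, mk3 (X1c x / X0c x) (Yc 0 x) (X0c x))
  else if Yc 0 x != 0 then (true, mk3 (Yc 1 x / Yc 0 x) (Yc 0 x) (X0c x))
  else (false, mk3 ((Yc n.+1 x - X1c x ^+ n) / Zc x) (Zc x) (X1c x)).

Lemma psi_psi_inv x : inPhat n x -> x <> origin K n.+4.+1 ->
  ~ inC (psi_inv x).2 /\ psi n (psi_inv x).1 (psi_inv x).2 = x.
Proof.
move=> Phx x0; rewrite /psi_inv.
have [X1x|X1x] := ifPn; first by split; [apply: notC_mk3; right | apply: psi_chart0_X1].
have [X0x|X0x] := ifPn; first by split; [apply: notC_mk3; right | apply: psi_chart1_X0].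
have [Y0x|Y0x] := ifPn; first by split; [apply: notC_mk3; left | apply: psi_chart1_Y0].
have Zx : Zc x != 0.
  case: (Phat_origin_or_chart Phx) => [|[|[|[|//]]]];
    by rewrite ?(negbTE X1x) ?(negbTE X0x) ?(negbTE Y0x).
by split; [apply: notC_mk3; left | apply: psi_chart0_Z].
Qed.

Lemma psi_onto_Phat x : inPhat n x -> exists b p, psi n b p = x.
Proof.
move=> Phx; have [->|x0] := Phat_origin_or_chart Phx.
  by exists false, (mk3 0 0 0); apply: psi_contract; rewrite // /inC uc_mk3 vc_mk3.
have x0' : x <> origin K n.+4.+1.
  by move=> xO; move: x0; rewrite xO /X1c /X0c /Yc /Zc /origin /= eqxx => -[|[|[|]]].
by exists (psi_inv x).1, (psi_inv x).2; case: (psi_psi_inv Phx x0').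
Qed.

Lemma mulIf_notC p (a b : K) : ~ inC p -> a * uc p = b * uc p -> a * vc p = b * vc p -> a = b.
Proof. by case/notC_coord => [u0 eu _|v0 _ ev]; [apply: (mulIf u0) | apply: (mulIf v0)]. Qed.

Lemma psi_chart1_inj p p' : psi n true p = psi n true p' -> ~ inC p -> p = p'.
Proof.
move=> e pC.
have e0 := congr1 (@X0c K n) e; have e1 := congr1 (@X1c K n) e.
have eY0 := congr1 (@Yc K n 0) e; have eY1 := congr1 (@Yc K n 1) e.
rewrite !psiX0 !psiX1 /f0 /f1 /= in e0 e1.
rewrite !psiY // !gfun_chart1 !expr0 !mul1r !expr1 in eY0 eY1.
apply: pt3_eq => //; apply: (mulIf_notC pC); first by rewrite {2}eY0.
by rewrite {2}e0.
Qed.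

Lemma psi_chart0_inj p p' : psi n false p = psi n false p' -> ~ inC p -> p = p'.
Proof.
move=> e pC.
have e0 := congr1 (@X0c K n) e; have e1 := congr1 (@X1c K n) e.
have eY := congr1 (@Yc K n n.+1) e; have eZ := congr1 (@Zc K n) e.
rewrite !psiX0 !psiX1 /f0 /f1 /= in e0 e1; rewrite !psiZ /hfun /= in eZ.
rewrite !psiY // !gfun_chart0 // subnn !expr0 !mul1r e1 in eY.
apply: pt3_eq => //; apply: (mulIf_notC pC); first by rewrite {2}eZ (addIr _ eY).
by rewrite {2}e1.
Qed.

Lemma psi_cross_chart q r : psi n false q = psi n true r -> ~ inC q ->
  tc q != 0 /\ r = trans n q.
Proof.
move=> e qC.
have e0 := congr1 (@X0c K n) e; have e1 := congr1 (@X1c K n) e.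
have eY0 := congr1 (@Yc K n 0) e; have eY1 := congr1 (@Yc K n 1) e.
have eZ := congr1 (@Zc K n) e.
rewrite !psiX0 !psiX1 /f0 /f1 /= in e0 e1; rewrite !psiZ /hfun /= in eZ.
rewrite !psiY // gfun_chart0 // gfun_chart0 // !gfun_chart1 in eY0 eY1.
rewrite subn0 expr0 mul1r in eY0; rewrite subSS subn0 expr1 in eY1.
have tt' : tc r * tc q = 1.
  have [v0|v0] := eqVneq (vc q) 0; last by apply: (mulIf v0); rewrite mul1r -mulrA e0 e1.
  have u0 : uc q != 0 by case: (notC_coord qC) => //; rewrite v0 eqxx.
  rewrite v0 expr0n_gt0 // !addr0 in eY0 eY1.
  have t0 : tc q != 0.
    apply: contra_neq u0 => t0.
    by rewrite eZ -e0 v0 mulr0 expr0n_gt0 // mulr0 subr0 -eY0 t0 mul0r !mulr0.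
  apply: (mulIf (mulf_neq0 (expf_neq0 n.+1 t0) u0)).
  have -> : tc r * tc q * (tc q ^+ n.+1 * uc q) = tc r * (tc q ^+ n.+1 * (tc q * uc q)).
    by ring.
  by rewrite eY0 -eY1 exprS; ring.
have t0 : tc q != 0 by apply: contra_eq_neq tt' => ->; rewrite mulr0 eq_sym oner_neq0.
split => //; apply: pt3_eq.
- by rewrite tc_trans -[LHS]mulr1 -(mulfV t0) mulrA tt' mul1r.
- by rewrite uc_trans -eY0 !exprS; ring.
- by rewrite vc_trans.
Qed.

Lemma Qequiv_of_psi_eq b p b' p' : psi n b' p' = psi n b p -> ~ inC p -> ~ inC p' ->
  Qequiv n (b', p') (b, p).
Proof.
move=> e pC p'C; case: b' b e => -[] e.
- by left; rewrite (psi_chart1_inj e).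
- by right; right; have [t0 ->] := psi_cross_chart (esym e) pC.
- by right; left; have [t0 ->] := psi_cross_chart e p'C.
- by left; rewrite (psi_chart0_inj e).
Qed.

Lemma psi_inv_psi b p : ~ inC p -> Qequiv n (psi_inv (psi n b p)) (b, p).
Proof.
move=> pC; have [invC e] := psi_psi_inv (inPhat_psi n b p) (psi_neq0_off_C pC).
by case: (psi_inv _) invC e => b' p' /= invC e; apply: Qequiv_of_psi_eq.
Qed.

(* [phi] is a morphism on the neighbourhood [G <> 0] of [x]. *)
Definition regular_near (phi : pt K n.+4.+1 -> Qpt K) x : Prop :=
  exists (c : bool) (G : pt K n.+4.+1 -> K) (A : 'I_3 -> pt K n.+4.+1 -> K),
    polyfun G /\ (forall i, polyfun (A i)) /\ G x != 0 /\
    forall y, inPhat n y -> y <> origin K n.+4.+1 -> G y != 0 ->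
      Qequiv n (phi y) (c, fun i => A i y / G y).

Lemma psi_inv_regular_near_chart x c (G a b d : pt K n.+4.+1 -> K) :
  polyfun G -> polyfun a -> polyfun b -> polyfun d -> G x != 0 ->
  (forall y, inPhat n y -> G y != 0 ->
     let q := mk3 (a y / G y) (b y / G y) (d y / G y) in ~ inC q /\ psi n c q = y) ->
  regular_near psi_inv x.
Proof.
move=> pG pa pb pd Gx chart; exists c, G, (fun i y => mk3 (a y) (b y) (d y) i).
split=> //; split; last split=> //.
  by move=> i; rewrite /mk3; case: (val i == 0%N); last case: (val i == 1%N).
move=> y Phy _ Gy; have [qC e] := chart y Phy Gy.
by rewrite mk3_div -{1}e; apply: psi_inv_psi.
Qed.

Lemma psi_inv_regular_near x : inPhat n x -> x <> origin K n.+4.+1 ->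
  regular_near psi_inv x.
Proof.
move=> Phx x0.
move: (@polyfun_X0 K n) (@polyfun_X1 K n) (@polyfun_Y K n) (@polyfun_Z K n).
move=> pX0 pX1 pY pZ.
case: (Phat_origin_or_chart Phx) => [//|[X1x|[X0x|[Y0x|Zx]]]].
- apply: (@psi_inv_regular_near_chart x false (@X1c K n) (@X0c K n)
    (fun y => Zc y * X1c y) (fun y => X1c y * X1c y)) => //; try exact: polyfun_mul.
  move=> y Phy X1y; rewrite !mulfK //.
  by split; [apply: notC_mk3; right | apply: psi_chart0_X1].
- apply: (@psi_inv_regular_near_chart x true (@X0c K n) (@X1c K n)
    (fun y => Yc 0 y * X0c y) (fun y => X0c y * X0c y)) => //; try exact: polyfun_mul.
  move=> y Phy X0y; rewrite !mulfK //.
  by split; [apply: notC_mk3; right | apply: psi_chart1_X0].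
- apply: (@psi_inv_regular_near_chart x true (@Yc K n 0) (@Yc K n 1)
    (fun y => Yc 0 y * Yc 0 y) (fun y => X0c y * Yc 0 y)) => //; try exact: polyfun_mul.
  move=> y Phy Y0y; rewrite !mulfK //.
  by split; [apply: notC_mk3; left | apply: psi_chart1_Y0].
- apply: (@psi_inv_regular_near_chart x false (@Zc K n)
    (fun y => Yc n.+1 y - X1c y ^+ n) (fun y => Zc y * Zc y) (fun y => X1c y * Zc y)) => //;
    try exact: polyfun_mul.
    by apply: polyfun_sub => //; apply: polyfun_exp.
  move=> y Phy Zy; rewrite !mulfK //.
  by split; [apply: notC_mk3; left | apply: psi_chart0_Z].
Qed.

End InverseOfPsi.

Lemma horner0_sum_Xpos (R : comRingType) (I : Type) (s : seq I) (P : pred I)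
    (c : I -> R) (e : I -> nat) :
  (forall i, P i -> (0 < e i)%N) -> (\sum_(i <- s | P i) c i *: 'X^(e i)).[0] = 0.
Proof.
move=> e_gt0; rewrite horner_sum big1 // => i Pi.
by rewrite hornerZ hornerXn expr0n gtn_eqF ?e_gt0 // mulr0.
Qed.

Section Surjectivity.
Variables (K : fieldType) (n : nat).
Implicit Types (p q : pt K 3) (x : pt K n.+4.+1) (m : term K).

(* In chart 1, [Y_i = t^i u], so a product of [b] coordinates [Y_i] realises
   [t^a u^b] for every [a <= (n+1) b]; [X1 = t v] supplies the remaining [t]'s. *)
Fixpoint Ymonomial (a b : nat) x : K :=
  if b is b'.+1 then Yc (minn a n.+1) x * Ymonomial (a - n.+1) b' x else 1.

Lemma Ymonomial_psi a b p :
  Ymonomial a b (psi n true p) = tc p ^+ minn a (n.+1 * b) * uc p ^+ b.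
Proof.
elim: b a => [|b IHb] a /=; first by rewrite muln0 minn0 mulr1.
rewrite IHb psiY ?geq_minr // gfun_chart1.
have -> : minn a (n.+1 * b.+1) = (minn a n.+1 + minn (a - n.+1) (n.+1 * b))%N by lia.
by rewrite exprD exprS; ring.
Qed.

Definition psi1_monomial (a b c : nat) x : K :=
  Ymonomial a b x * X1c x ^+ (a - n.+1 * b) * X0c x ^+ (c - (a - n.+1 * b)).

Lemma psi1_monomial_psi a b c p : (a <= n.+1 * b + c)%N ->
  psi1_monomial a b c (psi n true p) = tc p ^+ a * uc p ^+ b * vc p ^+ c.
Proof.
move=> le_a; rewrite /psi1_monomial Ymonomial_psi psiX1 psiX0 /f0 /f1 /= exprMn.
have -> : tc p ^+ a = tc p ^+ minn a (n.+1 * b) * tc p ^+ (a - n.+1 * b).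
  by rewrite -exprD; congr (_ ^+ _); lia.
have -> : vc p ^+ c = vc p ^+ (a - n.+1 * b) * vc p ^+ (c - (a - n.+1 * b)).
  by rewrite -exprD; congr (_ ^+ _); lia.
by ring.
Qed.

Lemma polyfun_psi1_monomial a b c : polyfun (psi1_monomial a b c).
Proof.
apply: polyfun_mul; first apply: polyfun_mul; last exact/polyfun_exp/polyfun_X0.
  by elim: b a => [|b IHb] a; [exact: polyfun_const | exact/polyfun_mul/IHb/polyfun_Y].
exact/polyfun_exp/polyfun_X1.
Qed.

Definition psi1_term m : bool := (et m <= n.+1 * eu m + ev m)%N.

Lemma chart1_split (F1 : pt K 3 -> K) : polyfun F1 ->
  exists (P : pt K n.+4.+1 -> K) (s : seq (term K)), polyfun P /\
    forall q, F1 q = P (psi n true q) + \sum_(m <- s | ~~ psi1_term m) term_eval q m.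
Proof.
case/polyfun_terms => s F1s.
exists (fun x => \sum_(m <- s | psi1_term m) coef m * psi1_monomial (et m) (eu m) (ev m) x), s.
split; first by apply: polyfun_sum => m; apply/polyfun_mul/polyfun_psi1_monomial/polyfun_const.
move=> q; rewrite F1s (bigID psi1_term) /=; congr (_ + _).
by apply: eq_bigr => m m1; rewrite psi1_monomial_psi // /term_eval !mulrA.
Qed.

Lemma term_eval_nonneg_weight m p : (eu m <= et m)%N ->
  term_eval p m = coef m * (tc p * uc p) ^+ eu m * vc p ^+ ev m * tc p ^+ (et m - eu m).
Proof. by move=> le_m; rewrite /term_eval exprMn -{1}(subnK le_m) exprD; ring. Qed.

Lemma term_eval_neg_weight m p : (et m < eu m)%N ->
  term_eval p m = coef m * (tc p * uc p) ^+ et m * uc p ^+ (eu m - et m) * vc p ^+ ev m.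
Proof. by move=> /ltnW le_m; rewrite /term_eval exprMn -{1}(subnK le_m) exprD; ring. Qed.

Lemma term_eval_mk3_inv m (c r v : K) : c != 0 -> (et m < eu m)%N ->
  term_eval (mk3 c (r / c) v) m = coef m * r ^+ eu m * v ^+ ev m * c^-1 ^+ (eu m - et m).
Proof.
move=> c0 lt_m; rewrite /term_eval tc_mk3 uc_mk3 vc_mk3 exprVn expfB // expr_div_n.
by field; rewrite ?expf_neq0.
Qed.

Lemma term_eval_trans_mk3 m (c r v : K) : c != 0 -> ~~ psi1_term m ->
  term_eval (trans n (mk3 c (r / c) v)) m =
  coef m * (v ^+ n + r) ^+ eu m * v ^+ ev m * c^-1 ^+ (et m - (n.+1 * eu m + ev m)).
Proof.
rewrite /psi1_term -ltnNge => c0 /ltnW le_m.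
rewrite /term_eval tc_trans uc_trans vc_trans tc_mk3 uc_mk3 vc_mk3.
have -> : c ^+ n.+1 * v ^+ n + c ^+ n.+2 * (r / c) = c ^+ n.+1 * (v ^+ n + r).
  by rewrite !exprS; field.
rewrite expfB_cond ?invr_eq0 ?(negbTE c0) // !exprMn -exprM exprD !exprVn.
by field; rewrite !expf_neq0 ?oner_neq0.
Qed.

Hypothesis K0 : [pchar K] =i pred0.

(* Weight of [t^a u^b v^c] under [(t, u, v) |-> (c t, u / c, v)] is [a - b]: in
   chart-1 coordinates the tail only has negative weights, so the part of
   nonnegative weight vanishes. *)
Lemma chart0_nonneg_weight_eq0 (s0 s : seq (term K)) :
  (forall c r v, c != 0 -> \sum_(m <- s0) term_eval (mk3 c (r / c) v) m =
     \sum_(m <- s | ~~ psi1_term m) term_eval (trans n (mk3 c (r / c) v)) m) ->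
  forall p, \sum_(m <- s0 | (eu m <= et m)%N) term_eval p m = 0.
Proof.
move=> s0s p.
pose L r v : {poly K} := \sum_(m <- s0 | (eu m <= et m)%N)
  (coef m * r ^+ eu m * v ^+ ev m) *: 'X^(et m - eu m).
pose Q r v : {poly K} :=
  \sum_(m <- s | ~~ psi1_term m)
     (coef m * (v ^+ n + r) ^+ eu m * v ^+ ev m) *: 'X^(et m - (n.+1 * eu m + ev m))
  - \sum_(m <- s0 | (et m < eu m)%N) (coef m * r ^+ eu m * v ^+ ev m) *: 'X^(eu m - et m).
have Lq q : \sum_(m <- s0 | (eu m <= et m)%N) term_eval q m = (L (tc q * uc q) (vc q)).[tc q].
  rewrite horner_sum; apply: eq_bigr => m le_m.
  by rewrite hornerZ hornerXn term_eval_nonneg_weight.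
suff L0 : forall r v, L r v = 0 by rewrite Lq L0 horner0.
move=> r v; apply: (poly_eq0_of_inv_eval K0 (q := Q r v)).
  rewrite hornerD hornerN !horner0_sum_Xpos ?subrr // => m; rewrite ?subn_gt0 //.
  by rewrite /psi1_term -ltnNge.
move=> c c0; have := Lq (mk3 c (r / c) v).
rewrite tc_mk3 uc_mk3 vc_mk3 [c * _]mulrC divfK // => <-.
have := s0s c r v c0; rewrite (bigID (fun m => (eu m <= et m)%N)) /= => /(canRL (addrK _)) ->.
rewrite hornerD hornerN !horner_sum; congr (_ - _).
  by apply: eq_bigr => m bad_m; rewrite hornerZ hornerXn term_eval_trans_mk3.
apply: eq_big => [m|m]; first by rewrite ltnNge.
by rewrite -ltnNge => lt_m; rewrite hornerZ hornerXn term_eval_mk3_inv.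
Qed.

Lemma chart0_polynomial_in_psi (G0 : pt K 3 -> K) (s : seq (term K)) : polyfun G0 ->
  (forall p, tc p != 0 -> G0 p = \sum_(m <- s | ~~ psi1_term m) term_eval (trans n p) m) ->
  exists P : pt K n.+4.+1 -> K, polyfun P /\ forall p, G0 p = P (psi n false p).
Proof.
case/polyfun_terms => s0 G0s0 G0s.
have N0 := @chart0_nonneg_weight_eq0 s0 s.
exists (fun x => \sum_(m <- s0 | (et m < eu m)%N)
  coef m * (Yc n.+1 x - X1c x ^+ n) ^+ et m * Zc x ^+ (eu m - et m) * X1c x ^+ ev m).
split.
  apply: polyfun_sum => m.
  apply: polyfun_mul; [apply: polyfun_mul; [apply: polyfun_mul|]|].
  - exact: polyfun_const.
  - exact/polyfun_exp/polyfun_sub/polyfun_exp/polyfun_X1/polyfun_Y.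
  - exact/polyfun_exp/polyfun_Z.
  - exact/polyfun_exp/polyfun_X1.
move=> p; rewrite G0s0 (bigID (fun m => (eu m <= et m)%N)) /= N0 ?add0r.
  apply: eq_big => [m|m]; first by rewrite ltnNge.
  rewrite -ltnNge => lt_m; rewrite psiY // gfun_chart0 // psiZ psiX1 /hfun /f1 /=.
  by rewrite subnn expr0 mul1r addrK term_eval_neg_weight.
by move=> c r v c0; rewrite -G0s0 G0s // tc_mk3.
Qed.

Lemma regular_chart1_of_chart0 (F : bool -> pt K 3 -> K) (P : pt K n.+4.+1 -> K) :
  regularQ n F -> polyfun P -> (forall p, F false p = P (psi n false p)) ->
  forall q, F true q = P (psi n true q).
Proof.
case=> compat [_ pF1] pP F0P q; apply/eqP; rewrite -subr_eq0; apply/eqP; move: q.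
apply: (@polyfun_eq0_off_hyperplane _ K0 _ _ (inord 0)).
  by apply/polyfun_sub/(polyfun_comp _ pP) => // j; apply: polyfun_psi.
move=> q /(trans_onto n)[p t0 <-].
by rewrite -compat // F0P psi_trans // subrr.
Qed.

Lemma regular_polynomial_in_psi (F : bool -> pt K 3 -> K) : regularQ n F ->
  exists P : pt K n.+4.+1 -> K, polyfun P /\ forall b p, F b p = P (psi n b p).
Proof.
move=> regF; have [compat [_ pF1]] := regF.
have [P1 [s [pP1 F1s]]] := chart1_split pF1.
pose G b p := F b p - P1 (psi n b p).
have regG : regularQ n G := regularQ_sub regF (regular_comp_psi pP1).
have [P0 [pP0 G0P]] : exists P, polyfun P /\ forall p, G false p = P (psi n false p).
  apply: (@chart0_polynomial_in_psi _ s); first exact: regG.2.1.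
  by move=> p t0; rewrite /G compat // psi_trans // F1s addrC addKr.
have G1P := regular_chart1_of_chart0 regG pP0 G0P.
exists (fun x => P1 x + P0 x); split; first exact: polyfun_add.
by case=> p; rewrite -?G0P -?G1P /G addrC subrK.
Qed.

End Surjectivity.

Theorem mainTheorem17 (K : closedFieldType) (hK : [pchar K] =i pred0)
    (n : nat) (hn : (1 <= n)%N) :
  (forall j : 'I_n.+4.+1, regularQ n (fun (b : bool) (p : pt K 3) => psi n b p j)) /\
  (forall (b : bool) (p : pt K 3), inPhat n (psi n b p)) /\
  (forall (b : bool) (p : pt K 3), inC p -> psi n b p = origin K n.+4.+1) /\
  (forall (b : bool) (p : pt K 3), ~ inC p -> psi n b p <> origin K n.+4.+1) /\
  (exists phi : pt K n.+4.+1 -> Qpt K,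
     (forall x, inPhat n x -> x <> origin K n.+4.+1 ->
        ~ inC (phi x).2 /\ psi n (phi x).1 (phi x).2 = x) /\
     (forall (b : bool) (p : pt K 3), ~ inC p -> Qequiv n (phi (psi n b p)) (b, p)) /\
     (forall x, inPhat n x -> x <> origin K n.+4.+1 ->
        exists (c : bool) (G : pt K n.+4.+1 -> K) (A : 'I_3 -> pt K n.+4.+1 -> K),
          polyfun G /\ (forall i, polyfun (A i)) /\ G x != 0 /\
          forall y, inPhat n y -> y <> origin K n.+4.+1 -> G y != 0 ->
            Qequiv n (phi y) (c, fun i => A i y / G y))) /\
  (forall F : bool -> pt K 3 -> K, regularQ n F ->
     exists P : pt K n.+4.+1 -> K, polyfun P /\
       forall (b : bool) (p : pt K 3), F b p = P (psi n b p)) /\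
  (forall P : pt K n.+4.+1 -> K, polyfun P ->
     (forall (b : bool) (p : pt K 3), P (psi n b p) = 0) ->
     forall x, inPhat n x -> P x = 0).
Proof.
split; first exact: regular_psi.
split; first exact: inPhat_psi.
split; first by move=> b p; apply: psi_contract.
split; first by move=> b p; apply: psi_neq0_off_C.
split.
  exists (@psi_inv K n); split; first exact: psi_psi_inv.
  split; first by move=> b p; apply: psi_inv_psi.
  exact: psi_inv_regular_near.
split; first exact: regular_polynomial_in_psi.
by move=> P _ P0 x /(psi_onto_Phat hn) [b [p <-]].
Qed.
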